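(* Let $X=(|X|,X^0,\mathbb{P}^{\mathrm{top}}X)$ be a multipointed $d$-space. Let $d(X)$ be the set of continuous paths $[0,1]\to|X|$ consisting of all constant paths together with all Moore compositions of the form \[(\gamma_1\phi_1\mu_{\ell_1})*\dots*(\gamma_n\phi_n\mu_{\ell_n})\] with $n\ge 1$, $\ell_1,\dots,\ell_n>0$, $\ell_1+\dots+\ell_n=1$, where $\gamma_1,\dots,\gamma_n$ are execution paths of $X$ and $\phi_i\in\mathcal{I}(1)$ for $i=1,\dots,n$. Then the pair $\vec{\mathrm{Sp}}(X):=(|X|,d(X))$ is a directed space, and the mapping $X\mapsto\vec{\mathrm{Sp}}(X)$, sending a map of multipointed $d$-spaces to the same underlying continuous map, is a well-defined functor $\vec{\mathrm{Sp}}$ from the category of multipointed $d$-spaces to the category of directed spaces.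
   Context: Let $\mathbf{Top}$ be the category of $\Delta$-generated spaces (or of $\Delta$-Hausdorff $\Delta$-generated spaces). For $\ell>0$ let $\mu_\ell:[0,\ell]\to[0,1]$, $\mu_\ell(t)=t/\ell$. For $\ell,\ell'\ge0$, $\mathcal{M}(\ell,\ell')$ is the set of non-decreasing surjective continuous maps $[0,\ell]\to[0,\ell']$, and $\mathcal{I}(\ell)$ is the set of non-decreasing continuous maps $[0,1]\to[0,\ell]$ (constant maps allowed). A Moore path of length $\ell\ge0$ in a space $U$ is a continuous map $[0,\ell]\to U$; the Moore composition of $\gamma_1:[0,\ell_1]\to U$ and $\gamma_2:[0,\ell_2]\to U$ with $\gamma_1(\ell_1)=\gamma_2(0)$ is the path $\gamma_1*\gamma_2:[0,\ell_1+\ell_2]\to U$ equal to $\gamma_1(t)$ for $t\in[0,\ell_1]$ and $\gamma_2(t-\ell_1)$ for $t\in[\ell_1,\ell_1+\ell_2]$ (it is associative). For $\gamma_1,\gamma_2:[0,1]\to U$ with $\gamma_1(1)=\gamma_2(0)$ the normalized composition is $\gamma_1*_N\gamma_2=(\gamma_1\mu_{1/2})*(\gamma_2\mu_{1/2})$. A multipointed $d$-space is a triple $X=(|X|,X^0,\mathbb{P}^{\mathrm{top}}X)$ where $|X|$ is a space, $X^0\subset|X|$ is a set (the states), and $\mathbb{P}^{\mathrm{top}}X$ is a set of continuous maps $[0,1]\to|X|$ (execution paths) such that: $\gamma(0),\gamma(1)\in X^0$ for every execution path $\gamma$; $\gamma\phi$ is an execution path for every execution path $\gamma$ and every $\phi\in\mathcal{M}(1,1)$;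 $\gamma_1*_N\gamma_2$ is an execution path for composable execution paths $\gamma_1,\gamma_2$. A map $f:X\to Y$ of multipointed $d$-spaces is a continuous map $f:|X|\to|Y|$ with $f(X^0)\subset Y^0$ and $f\gamma\in\mathbb{P}^{\mathrm{top}}Y$ for all $\gamma\in\mathbb{P}^{\mathrm{top}}X$. A directed space is a pair $Y=(|Y|,d(Y))$ where $|Y|$ is a space and $d(Y)$ is a set of continuous maps $[0,1]\to|Y|$ (directed paths) which contains all constant paths, is closed under normalized composition, and satisfies $\gamma\phi\in d(Y)$ for all $\gamma\in d(Y)$, $\phi\in\mathcal{I}(1)$. A morphism of directed spaces is a continuous map of underlying spaces sending directed paths to directed paths. *)

From HB Require Import structures.
From mathcomp Require Import all_boot all_order all_algebra.
From mathcomp Require Import all_classical all_reals all_analysis.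
Set Implicit Arguments. Unset Strict Implicit. Unset Printing Implicit Defensive.
Import Order.TTheory GRing.Theory Num.Theory.
Import numFieldNormedType.Exports.
Local Open Scope classical_set_scope.
Local Open Scope ring_scope.

Section Defs.
Variable R : realType.

(** Conventions: a (Moore) path of length l in a space T is represented by a
    total function R -> T of which only the values on [0, l] matter.  A "set of
    continuous maps [0,1] -> T" is represented by a set of functions R -> T
    which is saturated (closed under changing values outside [0,1]). *)

Definition saturated (T : Type) (P : set (R -> T)) : Prop :=
  forall g h, P g -> (forall t : R, 0 <= t <= 1 -> h t = g t) -> P h.

Definition tsimplex (n : nat) : set 'rV[R]_n.+1 :=
  [set x | (forall i, 0 <= x ord0 i) /\ \sum_(i < n.+1) x ord0 i = 1].
Arguments tsimplex n : clear implicits.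

Definition DeltaGenerated (T : topologicalType) : Prop :=
  forall A : set T,
    (forall (n : nat) (f : 'rV[R]_n.+1 -> T), {within (tsimplex n), continuous f} ->
       exists B : set 'rV[R]_n.+1, open B /\ (f @^-1` A) `&` tsimplex n = B `&` tsimplex n) ->
    open A.

Definition cpath (T : topologicalType) (g : R -> T) : Prop :=
  {within `[0, 1], continuous g}.

Definition mu (l : R) (t : R) : R := t / l.

Definition Mset (l l' : R) (phi : R -> R) : Prop :=
  {within `[0, l], continuous phi} /\
  (forall t, 0 <= t <= l -> 0 <= phi t <= l') /\
  (forall s t, 0 <= s -> s <= t -> t <= l -> phi s <= phi t) /\
  (forall u, 0 <= u <= l' -> exists2 t, 0 <= t <= l & phi t = u).

Definition Iset (l : R) (phi : R -> R) : Prop :=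
  {within `[0, 1], continuous phi} /\
  (forall t, 0 <= t <= 1 -> 0 <= phi t <= l) /\
  (forall s t, 0 <= s -> s <= t -> t <= 1 -> phi s <= phi t).

Definition moore (T : Type) (l : R) (g1 g2 : R -> T) : R -> T :=
  fun t => if t <= l then g1 t else g2 (t - l).

Fixpoint mcat (T : Type) (p : R * (R -> T)) (s : seq (R * (R -> T))) : R -> T :=
  match s with
  | [::] => p.2
  | q :: s' => moore p.1 p.2 (mcat q s')
  end.

Definition ncomp (T : Type) (g1 g2 : R -> T) : R -> T :=
  moore (1 / 2) (g1 \o mu (1 / 2)) (g2 \o mu (1 / 2)).

Definition is_mdspace (T : topologicalType) (X0 : set T) (P : set (R -> T)) : Prop :=
  [/\ saturated P,
      (forall g, P g -> cpath g),
      (forall g, P g -> X0 (g 0) /\ X0 (g 1)),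
      (forall g phi, P g -> Mset 1 1 phi -> P (g \o phi)) &
      (forall g1 g2, P g1 -> P g2 -> g1 1 = g2 0 -> P (ncomp g1 g2))].

Definition is_dspace (T : topologicalType) (d : set (R -> T)) : Prop :=
  [/\ saturated d,
      (forall g, d g -> cpath g),
      (forall x : T, d (fun _ => x)),
      (forall g1 g2, d g1 -> d g2 -> g1 1 = g2 0 -> d (ncomp g1 g2)) &
      (forall g phi, d g -> Iset 1 phi -> d (g \o phi))].

Definition mdmap (T T' : topologicalType) (X0 : set T) (P : set (R -> T))
    (Y0 : set T') (Q : set (R -> T')) (f : T -> T') : Prop :=
  [/\ continuous f, f @` X0 `<=` Y0 & forall g, P g -> Q (f \o g)].

Definition dmap (T T' : topologicalType) (d : set (R -> T)) (d' : set (R -> T'))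
    (f : T -> T') : Prop :=
  continuous f /\ forall g, d g -> d' (f \o g).

Definition piece (T : Type) (g : R -> T) (phi : R -> R) (l : R) : R -> T :=
  g \o phi \o mu l.

Definition dX (T : topologicalType) (P : set (R -> T)) : set (R -> T) :=
  [set g | cpath g /\
    ((exists x : T, forall t, 0 <= t <= 1 -> g t = x) \/
     exists (m : nat) (gam : nat -> R -> T) (phi : nat -> R -> R) (l : nat -> R),
       [/\ (forall i, (i <= m)%N -> P (gam i) /\ Iset 1 (phi i)),
           (forall i, (i <= m)%N -> 0 < l i),
           (\sum_(i < m.+1) l i = 1),
           (forall i, (i < m)%N -> gam i (phi i 1) = gam i.+1 (phi i.+1 0)) &
           (forall t, 0 <= t <= 1 ->
             g t = mcat (l 0%N, piece (gam 0%N) (phi 0%N) (l 0%N))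
                        [seq (l i, piece (gam i) (phi i) (l i)) | i <- iota 1 m] t)])].

End Defs.

From HB Require Import structures.
From mathcomp Require Import all_boot all_order all_algebra.
From mathcomp Require Import all_classical all_reals all_analysis.
From mathcomp Require Import lra.
Import Order.TTheory GRing.Theory Num.Theory.
Import numFieldNormedType.Exports.
Local Open Scope classical_set_scope.
Local Open Scope ring_scope.

(** Besides the constant paths, d(X) consists exactly of the "execution
    chains": finite concatenations, along a subdivision of [0, 1], of
    execution paths reparametrized by maps of I(1).  Chains are stable under
    precomposition with any non-decreasing continuous map: the intermediate
    value theorem pulls the subdivision back, and each piece is
    reparametrized affinely.  This gives stability under I(1); each half of
    [g1 *_N g2] is such a reparametrization of [g1] or [g2], and a constant
    path glued to a chain is the chain precomposed with a constant map.  Maps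
    of multipointed d-spaces send execution paths, hence chains, to chains. *)

Lemma within_comp_continuous {X Y Z : topologicalType} {A : set X} {B : set Y}
    {f : X -> Y} {g : Y -> Z} :
  {within A, continuous f} -> {within B, continuous g} -> f @` A `<=` B ->
  {within A, continuous (g \o f)}.
Proof.
move=> /subspace_continuousP cf /subspace_continuousP cg fAB.
apply/subspace_continuousP => x Ax.
apply: (cvg_comp _ _ _ (cg _ (fAB _ (imageP f Ax)))).
move=> W; rewrite {1}/within /= => /(cf x Ax); rewrite !nbhs_simpl /within /=.
by apply: filterS => t Wft At; exact: Wft At (fAB _ (imageP f At)).
Qed.

Lemma eq_within_continuous {X U : topologicalType} {A : set X} (f : X -> U) {g : X -> U} :
  (forall t, A t -> g t = f t) -> {within A, continuous f} -> {within A, continuous g}.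
Proof.
by move=> E; apply: subspace_eq_continuous => t /set_mem At; rewrite /from_subspace E.
Qed.

Section NondecreasingMaps.
Context {R : realType}.
Implicit Types a b c d e k : R.

Definition nondecreasing_map a b c d (phi : R -> R) : Prop :=
  {within `[a, b], continuous phi} /\
  (forall t, a <= t <= b -> c <= phi t <= d) /\
  (forall s t, a <= s -> s <= t -> t <= b -> phi s <= phi t).

Lemma Iset_nondecreasing_map l phi : Iset l phi <-> nondecreasing_map 0 1 0 l phi.
Proof. by []. Qed.

Lemma nondecreasing_map_comp {a b c d e k phi psi} :
  nondecreasing_map a b c d phi -> nondecreasing_map c d e k psi ->
  nondecreasing_map a b e k (psi \o phi).
Proof.
move=> [cphi [rphi mphi]] [cpsi [rpsi mpsi]]; split; [|split] => /=.
- apply: within_comp_continuous cphi cpsi _ => _ [t + <-].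
  by rewrite /= !in_itv /= => /rphi.
- by move=> t /rphi /rpsi.
- move=> s t s0 st t1.
  have /andP[? ?] := rphi s (ltac:(apply/andP; split; lra)).
  have /andP[? ?] := rphi t (ltac:(apply/andP; split; lra)).
  by apply: mpsi => //; exact: mphi.
Qed.

Lemma nondecreasing_map_sub {a b c d a' b' c' d' phi} :
  nondecreasing_map a b c d phi -> a <= a' -> b' <= b ->
  c' <= phi a' -> phi b' <= d' -> nondecreasing_map a' b' c' d' phi.
Proof.
move=> [cphi [_ mphi]] aa' b'b ca' b'd; split; [|split].
- by apply: continuous_subspaceW cphi => x /=; rewrite !in_itv /=; lra.
- move=> t /andP[a't tb']; apply/andP; split.
  + by apply: le_trans ca' (mphi _ _ _ _ _); lra.
  + by apply: le_trans (mphi _ _ _ _ _) b'd; lra.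
- by move=> s t a's st tb'; apply: mphi; lra.
Qed.

Lemma nondecreasing_map_cst a b c d x :
  c <= x <= d -> nondecreasing_map a b c d (fun=> x).
Proof.
move=> cxd; split; [|split] => //.
by apply: continuous_subspaceT; exact: cst_continuous.
Qed.

Lemma nondecreasing_map_mu {u v} :
  u < v -> nondecreasing_map u v 0 1 (fun t => mu (v - u) (t - u)).
Proof.
move=> uv; have vu0 : 0 < (v - u)^-1 by rewrite invr_gt0 subr_gt0.
split; [|split] => /=.
- apply: continuous_subspaceT => x.
  apply: (@continuousM R R (fun t => t - u) (fun=> (v - u)^-1)).
    by apply: continuousB; [exact: cvg_id | exact: cst_continuous].
  exact: cst_continuous.
- move=> t /andP[ut tv]; rewrite /mu; apply/andP; split.
    by apply: divr_ge0; lra.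
  by rewrite ler_pdivrMr; lra.
- by move=> s t _ st _; rewrite /mu ler_pM2r //; lra.
Qed.

Lemma nondecreasing_map_affine {u v} :
  u <= v -> nondecreasing_map 0 1 u v (fun s => u + s * (v - u)).
Proof.
move=> uv; split; [|split].
- apply: continuous_subspaceT => x.
  apply: (@continuousD R R R (fun=> u) (fun s => s * (v - u))).
    exact: cst_continuous.
  exact: mulrr_continuous.
- by move=> s /andP[s0 s1]; apply/andP; split; nra.
- by move=> s t _ st _; nra.
Qed.

End NondecreasingMaps.

Section ExecutionChains.
Context {R : realType} {T : topologicalType} (P : set (R -> T)).
Implicit Types (u v w : R) (h : R -> T).

Definition exec_piece u v h : Prop :=
  exists gam psi, [/\ u < v, P gam, Iset 1 psi &
    forall t, u <= t <= v -> h t = gam (psi (mu (v - u) (t - u)))].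

(* Consecutive pieces share the endpoint of their intervals: this encodes the
   matching condition [gam i (phi i 1) = gam i.+1 (phi i.+1 0)] of [dX]. *)
Inductive exec_chain : R -> R -> (R -> T) -> Prop :=
| chain_piece u v h : exec_piece u v h -> exec_chain u v h
| chain_cons u w v h : exec_piece u w h -> exec_chain w v h -> exec_chain u v h.

Definition dpath_on u v h : Prop :=
  (exists x, forall t, u <= t <= v -> h t = x) \/ exec_chain u v h.

Lemma exec_chain_lt {u v h} : exec_chain u v h -> u < v.
Proof.
by elim=> [{}u {}v {}h [? [? []]] | {}u w {}v {}h [? [? [uw _ _ _]]] _ wv] //;
  exact: lt_trans wv.
Qed.

Lemma exec_piece_ext {u v h h'} :
  exec_piece u v h -> (forall t, u <= t <= v -> h' t = h t) -> exec_piece u v h'.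
Proof.
move=> [gam [psi [uv Pg Ipsi Eh]]] E; exists gam, psi; split => // t ht.
by rewrite E // Eh.
Qed.

Lemma exec_chain_ext {u v h h'} :
  exec_chain u v h -> (forall t, u <= t <= v -> h' t = h t) -> exec_chain u v h'.
Proof.
move=> C; elim: C h' => [{}u {}v {}h Hp | {}u w {}v {}h Hp C IH] h' E.
  by apply: chain_piece; apply: exec_piece_ext Hp E.
have uw : u < w by case: Hp => [? [? []]].
have wv := exec_chain_lt C.
apply: chain_cons; first by apply: exec_piece_ext Hp _ => t ht; apply: E; lra.
by apply: IH => t ht; apply: E; lra.
Qed.

Lemma exec_chain_cat {u w v h} :
  exec_chain u w h -> exec_chain w v h -> exec_chain u v h.
Proof.
elim=> [{}u {}w {}h Hp | {}u w' {}w {}h Hp _ IH] C; first exact: chain_cons Hp C.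
by apply: chain_cons Hp _; apply: IH.
Qed.

Lemma exec_piece_comp {u v h u' v' phi} :
  exec_piece u v h -> u' < v' -> nondecreasing_map u' v' u v phi ->
  exec_piece u' v' (h \o phi).
Proof.
move=> [gam [psi [uv Pg Ipsi Eh]]] uv' phiI.
exists gam, (psi \o (fun t => mu (v - u) (t - u)) \o phi \o
                     (fun s => u' + s * (v' - u'))); split => //.
  apply/Iset_nondecreasing_map.
  apply: nondecreasing_map_comp (nondecreasing_map_affine (ltW uv')) _.
  apply: nondecreasing_map_comp phiI _.
  exact: nondecreasing_map_comp (nondecreasing_map_mu uv) Ipsi.
move=> t ht; have [_ [phiR _]] := phiI.
have affine_mu : u' + mu (v' - u') (t - u') * (v' - u') = t.
  by rewrite /mu divfK; lra.
by rewrite /= affine_mu Eh ?phiR.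
Qed.

Lemma exec_chain_comp {u v h u' v' phi} :
  exec_chain u v h -> u' < v' -> nondecreasing_map u' v' u v phi ->
  exec_chain u' v' (h \o phi).
Proof.
move=> C; elim: C u' v' phi => [{}u {}v {}h Hp | {}u w {}v {}h Hp C IH] u' v' phi uv' phiI.
  by apply: chain_piece; apply: (exec_piece_comp Hp uv' phiI).
have [cphi [phiR _]] := phiI.
have phiu' := phiR u' ltac:(lra); have phiv' := phiR v' ltac:(lra).
have [phiv'w | wphiv'] := leP (phi v') w.
  apply: chain_piece; apply: (exec_piece_comp Hp uv').
  by apply: (nondecreasing_map_sub phiI); lra.
have [wphiu' | phiu'w] := leP w (phi u').
  by apply: IH => //; apply: (nondecreasing_map_sub phiI); lra.
have [c] : exists2 c, c \in `[u', v'] & phi c = w.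
  by apply: IVT => //; [lra | rewrite ge_min le_max; apply/andP; split; apply/orP; lra].
rewrite in_itv /= => /andP[u'c cv'] phic.
have {}u'c : u' < c by rewrite lt_neqAle u'c andbT; apply/eqP => E; rewrite -E in phic; lra.
have {}cv' : c < v' by rewrite lt_neqAle cv' andbT; apply/eqP => E; rewrite E in phic; lra.
apply: (@chain_cons u' c v').
  by apply: (exec_piece_comp Hp u'c); apply: (nondecreasing_map_sub phiI); lra.
by apply: IH => //; apply: (nondecreasing_map_sub phiI); lra.
Qed.

Lemma exec_chain_cst {a b h u v c} :
  exec_chain a b h -> a <= c <= b -> u < v -> exec_chain u v (fun=> h c).
Proof.
by move=> C abc uv; apply: (exec_chain_comp C uv); apply: nondecreasing_map_cst.
Qed.

Definition exec_pieces (gam : nat -> R -> T) (phi : nat -> R -> R) (l : nat -> R)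
    (i : nat) : R * (R -> T) :=
  (l i, piece (gam i) (phi i) (l i)).

Definition moore_seq (F : nat -> R * (R -> T)) (m : nat) : R -> T :=
  mcat (F 0%N) (map F (iota 1 m)).

(* The non-constant clause of [dX], on an arbitrary interval [u, v]. *)
Definition moore_repr u v h : Prop :=
  exists m gam phi l, [/\ forall i, (i <= m)%N -> P (gam i) /\ Iset 1 (phi i),
    forall i, (i <= m)%N -> 0 < l i,
    \sum_(i < m.+1) l i = v - u,
    forall i, (i < m)%N -> gam i (phi i 1) = gam i.+1 (phi i.+1 0) &
    forall t, u <= t <= v -> h t = moore_seq (exec_pieces gam phi l) m (t - u)].

Lemma moore_seqS F m :
  moore_seq F m.+1 = moore (F 0%N).1 (F 0%N).2 (moore_seq (F \o succn) m).
Proof. by rewrite /moore_seq map_comp -(iotaDl 1 1). Qed.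

Lemma moore_seq_head F m t : t <= (F 0%N).1 -> moore_seq F m t = (F 0%N).2 t.
Proof. by case: m => [|m] // tl; rewrite moore_seqS /moore tl. Qed.

Lemma moore_repr_exec_chain {u v h} : moore_repr u v h -> exec_chain u v h.
Proof.
move=> [m]; elim: m u h => [|m IH] u h [gam [phi [l [Hgp Hl Hsum Hjoin Eh]]]].
  rewrite big_ord1 in Hsum; apply: chain_piece; exists (gam 0%N), (phi 0%N).
  have [Pg Iphi] := Hgp 0%N isT; have l0 := Hl 0%N isT.
  by split => // [|t /Eh ->]; [lra | rewrite -Hsum].
have {}Hsum : l 0%N + \sum_(i < m.+1) l i.+1 = v - u.
  by rewrite -Hsum [RHS]big_ord_recl.
have tail_ge0 : 0 <= \sum_(i < m.+1) l i.+1.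
  by apply: sumr_ge0 => i _; apply: ltW; apply: Hl; exact: ltn_ord i.
have l0 := Hl 0%N isT.
have ul : u + l 0%N - u = l 0%N by rewrite addrAC subrr add0r.
apply: (@chain_cons u (u + l 0%N) v).
  have [Pg Iphi] := Hgp 0%N isT.
  exists (gam 0%N), (phi 0%N); rewrite ul; split => // [|t /andP[ut tl]]; first lra.
  by rewrite Eh ?moore_seqS /moore /= ?ifT //; lra.
apply: IH; exists (gam \o succn), (phi \o succn), (l \o succn); split => /=.
- by move=> i; exact: Hgp i.+1.
- by move=> i; exact: Hl i.+1.
- lra.
- by move=> i; exact: Hjoin i.+1.
move=> t /andP[ut tv]; rewrite Eh ?moore_seqS /moore /=; last lra.
case: ifP => [tl | _]; last by congr moore_seq; lra.
have -> : t = u + l 0%N by lra.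
rewrite ul subrr moore_seq_head //=; last exact/ltW/Hl.
by rewrite /piece /mu /= divff ?gt_eqF // Hjoin // mul0r.
Qed.

Lemma exec_chain_moore_repr {u v h} : exec_chain u v h -> moore_repr u v h.
Proof.
elim=> [{}u {}v {}h [gam [psi [uv Pg Ipsi Eh]]] | {}u w {}v {}h Hp C
         [m [gam' [phi' [l' [Hgp Hl Hsum Hjoin Eh']]]]]].
  exists 0%N, (fun=> gam), (fun=> psi), (fun=> v - u).
  by split => //; rewrite ?big_ord1 // subr_gt0.
have [gam [psi [uw Pg Ipsi Eh]]] := Hp.
have wv := exec_chain_lt C.
exists m.+1, (fun i => if i is j.+1 then gam' j else gam),
  (fun i => if i is j.+1 then phi' j else psi),
  (fun i => if i is j.+1 then l' j else w - u); split.
- by case.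
- by case=> [|i] /=; [rewrite subr_gt0 | exact: Hl].
- by rewrite big_ord_recl /= Hsum; lra.
- case=> [_ | i] /=; last exact: Hjoin.
  have wu0 : w - u != 0 by rewrite subr_eq0 gt_eqF.
  have /esym := Eh w ltac:(lra); rewrite /mu divff // => ->.
  rewrite Eh' ?subrr ?moore_seq_head /=; [by rewrite /piece /mu /= mul0r | | lra].
  by apply: ltW; apply: Hl.
move=> t /andP[ut tv]; rewrite moore_seqS /moore /=.
case: leP => [tw | wt]; first by rewrite Eh //; lra.
by rewrite Eh'; [congr moore_seq | ]; lra.
Qed.

Lemma dpath_on_ext {u v h h'} :
  dpath_on u v h -> (forall t, u <= t <= v -> h' t = h t) -> dpath_on u v h'.
Proof.
move=> [[x Ex] | C] E; last by right; exact: exec_chain_ext C E.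
by left; exists x => t ut; rewrite E ?Ex.
Qed.

Lemma dpath_on_comp {u v h u' v' phi} :
  dpath_on u v h -> u' < v' -> nondecreasing_map u' v' u v phi ->
  dpath_on u' v' (h \o phi).
Proof.
move=> [[x Ex] | C] uv' phiI; last by right; exact: exec_chain_comp C uv' phiI.
by left; exists x => t /(proj1 (proj2 phiI)) /Ex.
Qed.

Lemma dpath_on_cat {u w v h} :
  u < w -> w < v -> dpath_on u w h -> dpath_on w v h -> dpath_on u v h.
Proof.
move=> uw wv [[x Ex] | C1] [[y Ey] | C2].
- have xw : h w = x by apply: Ex; lra.
  have yw : h w = y by apply: Ey; lra.
  left; exists x => t /andP[ut tv]; have [tw | wt] := leP t w.
    by apply: Ex; lra.
  by rewrite -xw yw; apply: Ey; lra.
- right; apply: (exec_chain_cat _ C2).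
  apply: (exec_chain_ext (exec_chain_cst (c := w) C2 _ uw)) => [|t ut]; first lra.
  by rewrite (Ex w) ?Ex //; lra.
- right; apply: (exec_chain_cat C1).
  apply: (exec_chain_ext (exec_chain_cst (c := w) C1 _ wv)) => [|t ut]; first lra.
  by rewrite (Ey w) ?Ey //; lra.
- by right; exact: exec_chain_cat C1 C2.
Qed.

Lemma dpath_on_ncomp g1 g2 :
  dpath_on 0 1 g1 -> dpath_on 0 1 g2 -> g1 1 = g2 0 -> dpath_on 0 1 (ncomp g1 g2).
Proof.
move=> D1 D2 g12; have half_gt0 : 0 < 1 / 2 :> R by lra.
have half_lt1 : 1 / 2 < 1 :> R by lra.
apply: (dpath_on_cat half_gt0 half_lt1).
  apply: (dpath_on_ext (dpath_on_comp D1 half_gt0 (nondecreasing_map_mu half_gt0))).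
  by move=> t /andP[_ th]; rewrite /ncomp /moore th /= !subr0.
apply: (dpath_on_ext (dpath_on_comp D2 half_lt1 (nondecreasing_map_mu half_lt1))).
move=> t /andP[ht _]; rewrite /ncomp /moore /= (_ : 1 - 1 / 2 = 1 / 2); last lra.
case: leP => // th; have -> : t = 1 / 2 by lra.
by rewrite /mu divff ?subrr ?mul0r // ?g12; lra.
Qed.

Hypothesis P_cpath : forall g, P g -> cpath g.

Lemma exec_piece_continuous {u v h} :
  exec_piece u v h -> {within `[u, v], continuous h}.
Proof.
move=> [gam [psi [uv Pg Ipsi Eh]]].
have psiI := nondecreasing_map_comp (nondecreasing_map_mu uv) Ipsi.
apply: (eq_within_continuous (gam \o (psi \o fun t => mu (v - u) (t - u)))).
  by move=> t; rewrite /= in_itv /= => /Eh.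
have [cpsi [psiR _]] := psiI.
apply: (within_comp_continuous cpsi (P_cpath _ Pg)) => _ [t + <-].
by rewrite /= !in_itv /= => /psiR.
Qed.

Lemma exec_chain_continuous {u v h} :
  exec_chain u v h -> {within `[u, v], continuous h}.
Proof.
elim=> [{}u {}v {}h /exec_piece_continuous // | {}u w {}v {}h Hp C IH].
have uw : u < w by case: Hp => [? [? []]].
have wv := exec_chain_lt C.
have -> : [set` `[u, v]] = [set` `[u, w]] `|` [set` `[w, v]].
  by apply/seteqP; split => t /=; rewrite !in_itv /=; lra.
apply: withinU_continuous => //; [exact: itv_closed | exact: itv_closed |].
exact: exec_piece_continuous Hp.
Qed.

Lemma dpath_on_continuous {u v h} :
  dpath_on u v h -> {within `[u, v], continuous h}.
Proof.
move=> [[x Ex] | /exec_chain_continuous //].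
apply: (eq_within_continuous (fun=> x)); first by move=> t; rewrite /= in_itv /= => /Ex.
by apply: continuous_subspaceT; exact: cst_continuous.
Qed.

Lemma dX_dpath_on g : dX P g <-> dpath_on 0 1 g.
Proof.
split.
  case=> _ [cst | [m [gam [phi [l [Hgp Hl Hsum Hjoin Eg]]]]]]; [by left | right].
  apply: moore_repr_exec_chain; exists m, gam, phi, l.
  by rewrite subr0; split => // t /Eg; rewrite subr0.
move=> D; split; first exact: dpath_on_continuous D.
case: D => [cst | /exec_chain_moore_repr [m [gam [phi [l [Hgp Hl Hsum Hjoin Eg]]]]]].
  by left.
rewrite subr0 in Hsum; right; exists m, gam, phi, l.
by split => // t /Eg; rewrite subr0.
Qed.

End ExecutionChains.

Section Functoriality.
Context {R : realType} {T T' : topologicalType}.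
Context {P : set (R -> T)} {Q : set (R -> T')} {f : T -> T'}.
Hypothesis fPQ : forall g, P g -> Q (f \o g).

Lemma exec_chain_map {u v h} : exec_chain P u v h -> exec_chain Q u v (f \o h).
Proof.
have piece_map u' v' h' : exec_piece P u' v' h' -> exec_piece Q u' v' (f \o h').
  move=> [gam [psi [uv Pg Ipsi Eh]]]; exists (f \o gam), psi; split => //.
    exact: fPQ.
  by move=> t /Eh /= ->.
elim=> [{}u {}v {}h /piece_map/chain_piece // | {}u w {}v {}h /piece_map Hp _ IH].
exact: chain_cons Hp IH.
Qed.

Lemma dpath_on_map {u v h} : dpath_on P u v h -> dpath_on Q u v (f \o h).
Proof.
move=> [[x Ex] | /exec_chain_map C]; last by right.
by left; exists (f x) => t /Ex /= ->.
Qed.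

End Functoriality.

Theorem proposition3p4 (R : realType) :
  (forall (T : topologicalType) (X0 : set T) (P : set (R -> T)),
      DeltaGenerated R T -> is_mdspace X0 P -> is_dspace (dX P)) /\
  (forall (T T' : topologicalType) (X0 : set T) (P : set (R -> T))
          (Y0 : set T') (Q : set (R -> T')) (f : T -> T'),
      DeltaGenerated R T -> DeltaGenerated R T' ->
      is_mdspace X0 P -> is_mdspace Y0 Q ->
      mdmap X0 P Y0 Q f -> dmap (dX P) (dX Q) f).
Proof.
split.
  move=> T X0 P _ [_ Pc _ _ _]; have dXE := dX_dpath_on P Pc.
  split.
  - by move=> g h /dXE Dg E; apply/dXE; exact: dpath_on_ext Dg E.
  - by move=> g [].
  - by move=> x; apply/dXE; left; exists x.
  - by move=> g1 g2 /dXE D1 /dXE D2 E; apply/dXE; exact: dpath_on_ncomp.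
  - by move=> g phi /dXE Dg Iphi; apply/dXE; exact: dpath_on_comp Dg ltr01 Iphi.
move=> T T' X0 P Y0 Q f _ _ [_ Pc _ _ _] [_ Qc _ _ _] [fc _ fPQ]; split => // g.
move=> /(dX_dpath_on P Pc) Dg; apply/(dX_dpath_on Q Qc).
exact: (dpath_on_map fPQ Dg).
Qed.
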